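(* Let $P$ be a poset which admits a strictly isotone map $g:P\to P\uparrow x=\{y\in P\mid y\ge x\}$ for some non-minimal element $x\in P$. Then there exists no strictly isotone map $f:\mathrm{id}(P)\to P$. In particular, if $P$ is the lattice of all subsets of an infinite set, or the lattice of all equivalence relations on an infinite set, there is no strictly isotone map $\mathrm{id}(P)\to P$.
   Context: For a poset $P$, an ideal of $P$ is an upward directed downset of $P$ (a downset $d$ satisfies $x\le y\in d\Rightarrow x\in d$; upward directed means every two elements of the set have a common upper bound in the set). $\mathrm{id}(P)$ denotes the set of nonempty ideals of $P$, ordered by inclusion. A map $f:P\to Q$ of posets is strictly isotone if $x<y$ implies $f(x)<f(y)$. *)

From Stdlib Require Import Arith.

Definition is_poset {T : Type} (le : T -> T -> Prop) : Prop :=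
  (forall x, le x x) /\
  (forall x y, le x y -> le y x -> x = y) /\
  (forall x y z, le x y -> le y z -> le x z).

Definition lt_of {T : Type} (le : T -> T -> Prop) (x y : T) : Prop :=
  le x y /\ x <> y.

Definition strictly_isotone {A B : Type} (leA : A -> A -> Prop)
  (leB : B -> B -> Prop) (f : A -> B) : Prop :=
  forall a b, lt_of leA a b -> lt_of leB (f a) (f b).

Definition is_ideal {T : Type} (le : T -> T -> Prop) (d : T -> Prop) : Prop :=
  (exists x, d x) /\
  (forall x y, le x y -> d y -> d x) /\
  (forall x y, d x -> d y -> exists z, d z /\ le x z /\ le y z).

Definition ideal {T : Type} (le : T -> T -> Prop) : Type :=
  { d : T -> Prop | is_ideal le d }.

Definition ideal_le {T : Type} (le : T -> T -> Prop) (d e : ideal le) : Prop :=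
  forall x, proj1_sig d x -> proj1_sig e x.

Definition upset {T : Type} (le : T -> T -> Prop) (x : T) : Type :=
  { y : T | le x y }.

Definition upset_le {T : Type} (le : T -> T -> Prop) (x : T)
  (a b : upset le x) : Prop := le (proj1_sig a) (proj1_sig b).

Definition infinite (X : Type) : Prop :=
  ~ exists (n : nat) (h : X -> nat),
      (forall x, h x < n) /\ (forall x y, h x = h y -> x = y).

Definition subset_le (X : Type) (A B : X -> Prop) : Prop :=
  forall x, A x -> B x.

Definition is_equivalence {X : Type} (R : X -> X -> Prop) : Prop :=
  (forall x, R x x) /\ (forall x y, R x y -> R y x) /\
  (forall x y z, R x y -> R y z -> R x z).

Definition eqrel (X : Type) : Type := { R : X -> X -> Prop | is_equivalence R }.

Definition eqrel_le (X : Type) (R S : eqrel X) : Prop :=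
  forall x y, proj1_sig R x y -> proj1_sig S x y.

(* Composing a strictly isotone [f : id(P) -> P] with [g] and the inclusion of
   [P↑x] gives a strictly isotone [k : id(P) -> P] with values above [x], so for
   [y < x] every element of the principal ideal [↓y] lies strictly below [k ↓y].
   Iterating [I ↦ ↓(k I)] from [↓y] and taking unions at limit stages yields, by
   the Bourbaki-Witt argument, a chain of ideals each strictly below its [k]-value.
   Its union [U] is again such an ideal, yet [k U ∈ ↓(k U)], a member of the chain
   contained in [U].  For subsets and equivalence relations on an infinite set, [g]
   comes from an injection of the set into itself that misses two points. *)

From Stdlib Require Import Arith Classical ClassicalEpsilon FunctionalExtensionality
  PropExtensionality ProofIrrelevance List Lia.

Section Ideals.
Variables (T : Type) (le : T -> T -> Prop).
Hypothesis le_poset : is_poset le.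

Local Notation "I <=i J" := (ideal_le le I J) (at level 70).

Lemma principal_is_ideal (p : T) : is_ideal le (fun q => le q p).
Proof.
  destruct le_poset as (refl & _ & trans).
  split; [exists p; apply refl | split].
  - intros q r Hqr Hrp. exact (trans _ _ _ Hqr Hrp).
  - intros q r Hq Hr. exists p. auto.
Qed.

Definition principal (p : T) : ideal le := exist _ _ (principal_is_ideal p).

Definition is_union (C : ideal le -> Prop) (U : ideal le) : Prop :=
  forall p, proj1_sig U p <-> exists I, C I /\ proj1_sig I p.

Definition strictly_below (I : ideal le) (p : T) : Prop :=
  forall q, proj1_sig I q -> lt_of le q p.

Section Tower.
Variable k : ideal le -> T.
Hypothesis k_strict : strictly_isotone (ideal_le le) le k.
Variable I0 : ideal le.
Hypothesis I0_below : strictly_below I0 (k I0).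

Let refl : forall p, le p p. Proof. apply le_poset. Qed.
Let antisym : forall p q, le p q -> le q p -> p = q. Proof. apply le_poset. Qed.
Let trans : forall p q r, le p q -> le q r -> le p r. Proof. apply le_poset. Qed.

Lemma k_mono {I J} : I <=i J -> le (k I) (k J).
Proof.
  intros HIJ. destruct (classic (I = J)) as [<- | HneIJ]; [apply refl |].
  apply k_strict. split; assumption.
Qed.

Definition next (I : ideal le) : ideal le := principal (k I).

Lemma next_mono I J : I <=i J -> next I <=i next J.
Proof. intros HIJ p Hp. exact (trans _ _ _ Hp (k_mono HIJ)). Qed.

Definition tower_closed (A : ideal le -> Prop) : Prop :=
  A I0 /\ (forall I, A I -> A (next I)) /\
  (forall C U, (forall I, C I -> A I) -> (exists I, C I) -> is_union C U -> A U).

Definition tower (I : ideal le) : Prop := forall A, tower_closed A -> A I.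

Lemma tower_is_closed : tower_closed tower.
Proof.
  split; [| split].
  - intros A HA. apply HA.
  - intros I HI A HA. apply HA, HI, HA.
  - intros C U HC Hne HU A HA. apply (proj2 (proj2 HA) C U); auto.
    intros I HI. exact (HC I HI A HA).
Qed.

Lemma tower_ind (A : ideal le -> Prop) :
  A I0 -> (forall I, tower I -> A I -> A (next I)) ->
  (forall C U, (forall I, C I -> tower I /\ A I) -> (exists I, C I) -> is_union C U -> A U) ->
  forall I, tower I -> A I.
Proof.
  intros A0 Anext Aunion I HI.
  destruct tower_is_closed as (T0 & Tnext & Tunion).
  refine (proj2 (HI (fun J => tower J /\ A J) _)).
  split; [| split].
  - auto.
  - intros J [HJ AJ]. auto.
  - intros C U HC Hne HU. split.
    + apply (Tunion C U); auto. intros J HJ. apply HC, HJ.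
    + exact (Aunion C U HC Hne HU).
Qed.

Lemma tower_strictly_below : forall I, tower I -> strictly_below I (k I).
Proof.
  apply tower_ind.
  - exact I0_below.
  - intros I _ HI p Hp. simpl in Hp.
    assert (Hk : lt_of le (k I) (k (next I))).
    { apply k_strict. split.
      - intros q Hq. apply HI, Hq.
      - intros Heq. assert (Hin : proj1_sig (next I) (k I)) by apply refl.
        rewrite <- Heq in Hin. apply (HI _ Hin); reflexivity. }
    destruct Hk as [Hle Hne]. split; [exact (trans _ _ _ Hp Hle) |].
    intros ->. apply Hne, antisym; assumption.
  - intros C U HC _ HU p Hp. destruct (proj1 (HU p) Hp) as (I & HI & HpI).
    destruct (proj2 (HC I HI) p HpI) as [Hle Hne].
    assert (HkIU : le (k I) (k U)).
    { apply k_mono. intros q Hq. apply HU. exists I. auto. }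
    split; [exact (trans _ _ _ Hle HkIU) |].
    intros ->. apply Hne, antisym; assumption.
Qed.

Lemma next_inflationary {I} : tower I -> I <=i next I.
Proof. intros HI p Hp. apply (tower_strictly_below _ HI), Hp. Qed.

Lemma tower_ge_base : forall I, tower I -> I0 <=i I.
Proof.
  apply tower_ind.
  - intros p Hp. exact Hp.
  - intros I HI HI0 p Hp. apply next_inflationary; auto.
  - intros C U HC [J HJ] HU p Hp. apply HU. exists J. split; auto. apply (HC J HJ), Hp.
Qed.

(* Bourbaki-Witt: [c] is extreme when no smaller tower member jumps over it
   by [next]; every tower member turns out to be extreme, whence the tower is a chain. *)
Definition extreme (c : ideal le) : Prop :=
  forall I, tower I -> I <=i c -> ~ c <=i I -> next I <=i c.

Lemma extreme_split {c} : tower c -> extreme c ->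
  forall I, tower I -> I <=i c \/ next c <=i I.
Proof.
  intros Hc Hext. apply tower_ind.
  - left. apply tower_ge_base, Hc.
  - intros I HI [HIc | HcI].
    + destruct (classic (c <=i I)) as [HcI | HnotcI].
      * right. apply next_mono, HcI.
      * left. apply Hext; assumption.
    + right. intros p Hp. apply next_inflationary; auto.
  - intros C U HC _ HU.
    destruct (classic (exists I, C I /\ ~ I <=i c)) as [(I & HI & HnotIc) | Hall].
    + right. destruct (HC I HI) as [_ [HIc | HcI]]; [contradiction |].
      intros p Hp. apply HU. exists I. auto.
    + left. intros p Hp. destruct (proj1 (HU p) Hp) as (I & HI & HpI).
      destruct (classic (I <=i c)) as [HIc | HnotIc]; [auto |].
      exfalso. eauto.
Qed.

Lemma tower_extreme : forall c, tower c -> extreme c.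
Proof.
  apply tower_ind.
  - intros I HI _ Hnot. exfalso. apply Hnot, tower_ge_base, HI.
  - intros c Hc Hext I HI HIc Hnot.
    destruct (extreme_split Hc Hext I HI) as [HIc' | HcI]; [| contradiction].
    apply next_mono, HIc'.
  - intros C U HC _ HU I HI HIU Hnot.
    destruct (classic (exists J, C J /\ ~ J <=i I)) as [(J & HJ & HnotJI) | Hall].
    + destruct (HC J HJ) as [TJ EJ].
      destruct (extreme_split TJ EJ I HI) as [HIJ | HJI].
      * intros p Hp. apply HU. exists J. split; auto. apply (EJ I HI HIJ HnotJI), Hp.
      * exfalso. apply HnotJI. intros p Hp. apply HJI, next_inflationary; auto.
    + exfalso. apply Hnot. intros p Hp. destruct (proj1 (HU p) Hp) as (J & HJ & HpJ).
      destruct (classic (J <=i I)) as [HJI | HnotJI]; [auto |].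
      exfalso. eauto.
Qed.

Lemma tower_total {I J} : tower I -> tower J -> I <=i J \/ J <=i I.
Proof.
  intros HI HJ.
  destruct (extreme_split HJ (tower_extreme _ HJ) I HI) as [HIJ | HJI]; [auto |].
  right. intros p Hp. apply HJI, next_inflationary; auto.
Qed.

Lemma tower_union_is_ideal : is_ideal le (fun p => exists I, tower I /\ proj1_sig I p).
Proof.
  split; [| split].
  - destruct (proj1 (proj2_sig I0)) as [p Hp]. exists p, I0.
    split; [apply tower_is_closed | exact Hp].
  - intros p q Hpq (I & HI & Hq). exists I. split; auto.
    exact (proj1 (proj2 (proj2_sig I)) p q Hpq Hq).
  - intros p q (I & HI & Hp) (J & HJ & Hq).
    destruct (tower_total HI HJ) as [HIJ | HJI].
    + destruct (proj2 (proj2 (proj2_sig J)) p q (HIJ p Hp) Hq) as (r & Hr & Hpr & Hqr).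
      exists r. split; [exists J |]; auto.
    + destruct (proj2 (proj2 (proj2_sig I)) p q Hp (HJI q Hq)) as (r & Hr & Hpr & Hqr).
      exists r. split; [exists I |]; auto.
Qed.

Theorem no_ideal_below_its_image : False.
Proof.
  set (U := exist _ _ tower_union_is_ideal : ideal le).
  destruct tower_is_closed as (T0 & Tnext & Tunion).
  assert (HU : tower U).
  { apply (Tunion tower U); [auto | exists I0; exact T0 | intros p; reflexivity]. }
  assert (HkU : proj1_sig U (k U)) by (exists (next U); split; [auto | apply refl]).
  apply (tower_strictly_below _ HU _ HkU); reflexivity.
Qed.

End Tower.
End Ideals.

Lemma strictly_isotone_comp {A B C : Type} {leA : A -> A -> Prop} {leB : B -> B -> Prop}
  {leC : C -> C -> Prop} {f : A -> B} {g : B -> C} :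
  strictly_isotone leA leB f -> strictly_isotone leB leC g ->
  strictly_isotone leA leC (fun a => g (f a)).
Proof. intros Hf Hg a b Hab. apply Hg, Hf, Hab. Qed.

Lemma upset_val_strictly_isotone {T : Type} (le : T -> T -> Prop) (x : T) :
  strictly_isotone (upset_le le x) le (@proj1_sig _ _).
Proof.
  intros a b [Hab Hne]. split; [exact Hab |].
  intros Heq. apply Hne. destruct a as [a Ha], b as [b Hb]. simpl in Heq. subst b.
  f_equal. apply proof_irrelevance.
Qed.

Lemma upset_strictly_isotone_of_embedding {T : Type} (le : T -> T -> Prop) (x : T)
  (h : T -> T) (h_above : forall t, le x (h t)) :
  is_poset le -> (forall a b, le a b -> le (h a) (h b)) -> (forall a b, le (h a) (h b) -> le a b) ->
  strictly_isotone le (upset_le le x) (fun t => exist _ (h t) (h_above t)).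
Proof.
  intros (refl & antisym & _) h_mono h_reflect a b [Hab Hne]. split; [apply h_mono, Hab |].
  intros Heq. apply (f_equal (@proj1_sig _ _)) in Heq. simpl in Heq.
  apply Hne, antisym; [exact Hab |]. apply h_reflect. rewrite Heq. apply refl.
Qed.

Theorem no_strictly_isotone_ideal_map (T : Type) (le : T -> T -> Prop) :
  is_poset le -> forall x : T, (exists y, lt_of le y x) ->
  forall g : T -> upset le x, strictly_isotone le (upset_le le x) g ->
  ~ exists f : ideal le -> T, strictly_isotone (ideal_le le) le f.
Proof.
  intros Hle x [y [Hyx Hne]] g Hg [f Hf].
  pose proof Hle as (refl & antisym & trans).
  set (k := fun I => proj1_sig (g (f I))).
  assert (Hk : strictly_isotone (ideal_le le) le k).
  { exact (strictly_isotone_comp (strictly_isotone_comp Hf Hg) (upset_val_strictly_isotone le x)). }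
  apply (no_ideal_below_its_image T le Hle k Hk (principal T le Hle y)).
  intros q Hqy. assert (Hx : le x (k (principal T le Hle y))) by apply (proj2_sig (g _)).
  split; [exact (trans _ _ _ Hqy (trans _ _ _ Hyx Hx)) |].
  intros ->. apply Hne, antisym; [exact Hyx | exact (trans _ _ _ Hx Hqy)].
Qed.

Section InfiniteType.
Variable X : Type.
Hypothesis X_infinite : infinite X.

(* A list covering [X] would yield an injection of [X] into [{0..n-1}],
   namely the position of an element in the list. *)
Lemma infinite_avoid_list (L : list X) : exists u, ~ In u L.
Proof.
  apply NNPP. intros Hcover. apply X_infinite.
  assert (HL : forall u, exists i, i < length L /\ nth_error L i = Some u).
  { intros u. apply NNPP. intros Hnot. apply Hcover. exists u. intros Hu.
    apply Hnot. destruct (In_nth_error L u Hu) as [i Hi]. exists i.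
    split; [apply nth_error_Some; congruence | exact Hi]. }
  destruct (choice _ HL) as [pos Hpos].
  exists (length L), pos. split.
  - intros u. apply Hpos.
  - intros u v Heq. pose proof (proj2 (Hpos u)) as Hu. pose proof (proj2 (Hpos v)) as Hv.
    rewrite Heq in Hu. congruence.
Qed.

Definition fresh (L : list X) : X :=
  proj1_sig (constructive_indefinite_description _ (infinite_avoid_list L)).

Lemma fresh_not_in L : ~ In (fresh L) L.
Proof. exact (proj2_sig (constructive_indefinite_description _ (infinite_avoid_list L))). Qed.

Fixpoint enum_prefix (n : nat) : list X :=
  match n with
  | 0 => nil
  | S n => fresh (enum_prefix n) :: enum_prefix n
  end.

Definition enum (n : nat) : X := fresh (enum_prefix n).

Lemma enum_in_prefix i j : i < j -> In (enum i) (enum_prefix j).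
Proof.
  induction j as [| j IH]; intros Hij; [lia |]. simpl.
  destruct (Nat.eq_dec i j) as [-> | Hne]; [left; reflexivity |].
  right. apply IH. lia.
Qed.

Lemma enum_inj i j : enum i = enum j -> i = j.
Proof.
  intros Heq. destruct (Nat.lt_trichotomy i j) as [Hij | [Hij | Hji]]; [| exact Hij |].
  - exfalso. apply (fresh_not_in (enum_prefix j)). fold (enum j). rewrite <- Heq.
    apply enum_in_prefix, Hij.
  - exfalso. apply (fresh_not_in (enum_prefix i)). fold (enum i). rewrite Heq.
    apply enum_in_prefix, Hji.
Qed.

(* Hilbert's hotel, vacating rooms [enum 0] and [enum 1]. *)
Definition shift (u : X) : X :=
  match excluded_middle_informative (exists i, u = enum i) with
  | left Hu => enum (S (S (proj1_sig (constructive_indefinite_description _ Hu))))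
  | right _ => u
  end.

Lemma shift_inj u v : shift u = shift v -> u = v.
Proof.
  unfold shift.
  destruct (excluded_middle_informative (exists i, u = enum i)) as [Hu | Hu];
  destruct (excluded_middle_informative (exists i, v = enum i)) as [Hv | Hv].
  - destruct (constructive_indefinite_description _ Hu) as [i ->].
    destruct (constructive_indefinite_description _ Hv) as [j ->]. simpl.
    intros Heq. apply enum_inj in Heq. congruence.
  - destruct (constructive_indefinite_description _ Hu) as [i Hi]. simpl.
    intros Heq. exfalso. apply Hv. exists (S (S i)). symmetry. exact Heq.
  - destruct (constructive_indefinite_description _ Hv) as [j Hj]. simpl.
    intros Heq. exfalso. apply Hu. exists (S (S j)). exact Heq.
  - auto.
Qed.

Lemma shift_ne_enum u n : n < 2 -> shift u <> enum n.
Proof.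
  intros Hn. unfold shift.
  destruct (excluded_middle_informative (exists i, u = enum i)) as [Hu | Hu].
  - destruct (constructive_indefinite_description _ Hu) as [i Hi]. simpl.
    intros Heq. apply enum_inj in Heq. lia.
  - intros ->. eauto.
Qed.

End InfiniteType.

Lemma infinite_injection_missing_two (X : Type) : infinite X ->
  exists (a b : X) (e : X -> X), a <> b /\ (forall s t, e s = e t -> s = t) /\
    (forall s, e s <> a /\ e s <> b).
Proof.
  intros Hinf. exists (enum X Hinf 0), (enum X Hinf 1), (shift X Hinf). split; [| split].
  - intros Heq. apply enum_inj in Heq. discriminate.
  - apply shift_inj.
  - intros s. split; apply shift_ne_enum; lia.
Qed.

Lemma subset_poset (X : Type) : is_poset (subset_le X).
Proof.
  split; [| split]; unfold subset_le; auto.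
  intros A B HAB HBA. apply functional_extensionality. intros u.
  apply propositional_extensionality. split; auto.
Qed.

Theorem no_strictly_isotone_ideal_map_subsets (X : Type) : infinite X ->
  ~ exists f : ideal (subset_le X) -> (X -> Prop),
      strictly_isotone (ideal_le (subset_le X)) (subset_le X) f.
Proof.
  intros Hinf.
  destruct (infinite_injection_missing_two X Hinf) as (a & b & e & _ & e_inj & e_miss).
  set (h := fun (A : X -> Prop) u => u = a \/ exists s, A s /\ u = e s).
  assert (h_above : forall A, subset_le X (fun u => u = a) (h A)).
  { intros A u Hu. left. exact Hu. }
  apply (no_strictly_isotone_ideal_map _ _ (subset_poset X) (fun u => u = a))
    with (g := fun A => exist _ (h A) (h_above A)).
  - exists (fun _ => False). split; [intros u [] |].
    intros Heq. apply (f_equal (fun A => A a)) in Heq. simpl in Heq. rewrite Heq. reflexivity.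
  - apply upset_strictly_isotone_of_embedding; [apply subset_poset | |].
    + intros A B HAB u [Hu | (s & Hs & Hu)]; [left | right; exists s]; auto.
    + intros A B Hh s Hs.
      assert (Hes : h B (e s)) by (apply Hh; right; exists s; auto).
      destruct Hes as [Ha | (t & Ht & Hst)].
      * exfalso. exact (proj1 (e_miss s) Ha).
      * rewrite (e_inj _ _ Hst). exact Ht.
Qed.

Lemma eqrel_poset (X : Type) : is_poset (eqrel_le X).
Proof.
  split; [| split]; unfold eqrel_le; auto.
  intros [R HR] [S HS] HRS HSR. simpl in *.
  assert (HeqRS : R = S).
  { apply functional_extensionality. intros u. apply functional_extensionality. intros v.
    apply propositional_extensionality. split; auto. }
  subst S. f_equal. apply proof_irrelevance.
Qed.

Definition pair_rel {X : Type} (a b u v : X) : Prop :=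
  u = v \/ (u = a /\ v = b) \/ (u = b /\ v = a).

Lemma pair_rel_equivalence {X : Type} (a b : X) : is_equivalence (pair_rel a b).
Proof. unfold pair_rel. split; [| split]; intros; intuition congruence. Qed.

Section ImageJoin.
Variables (X : Type) (a b : X) (e : X -> X).
Hypothesis e_inj : forall s t, e s = e t -> s = t.
Hypothesis e_miss : forall s, e s <> a /\ e s <> b.

Definition image_join (R : X -> X -> Prop) (u v : X) : Prop :=
  pair_rel a b u v \/ exists s t, u = e s /\ v = e t /\ R s t.

Lemma pair_rel_image u s : pair_rel a b u (e s) -> u = e s.
Proof.
  intros [Hu | [[_ Hb] | [_ Ha]]]; [exact Hu | |]; exfalso.
  - exact (proj2 (e_miss s) Hb).
  - exact (proj1 (e_miss s) Ha).
Qed.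

Lemma image_join_equivalence R : is_equivalence R -> is_equivalence (image_join R).
Proof.
  intros (R_refl & R_sym & R_trans).
  destruct (pair_rel_equivalence a b) as (P_refl & P_sym & P_trans).
  split; [| split].
  - intros u. left. apply P_refl.
  - intros u v [Huv | (s & t & -> & -> & Hst)]; [left; auto | right; exists t, s; auto].
  - intros u v w [Huv | (s & t & -> & -> & Hst)] [Hvw | (s' & t' & Hv & -> & Hst')].
    + left. eauto.
    + subst v. rewrite (pair_rel_image _ _ Huv). right. exists s', t'. auto.
    + apply P_sym, pair_rel_image in Hvw. subst w. right. exists s, t. auto.
    + apply e_inj in Hv. subst s'. right. exists s, t'. eauto.
Qed.

End ImageJoin.

Theorem no_strictly_isotone_ideal_map_eqrels (X : Type) : infinite X ->
  ~ exists f : ideal (eqrel_le X) -> eqrel X,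
      strictly_isotone (ideal_le (eqrel_le X)) (eqrel_le X) f.
Proof.
  intros Hinf.
  destruct (infinite_injection_missing_two X Hinf) as (a & b & e & Hab & e_inj & e_miss).
  set (collapse := exist _ _ (pair_rel_equivalence a b) : eqrel X).
  set (h := fun R : eqrel X =>
    exist _ _ (image_join_equivalence X a b e e_inj e_miss _ (proj2_sig R)) : eqrel X).
  assert (h_above : forall R, eqrel_le X collapse (h R)).
  { intros R u v Huv. left. exact Huv. }
  apply (no_strictly_isotone_ideal_map _ _ (eqrel_poset X) collapse)
    with (g := fun R => exist _ (h R) (h_above R)).
  - assert (Heq_rel : is_equivalence (@eq X)) by (split; [| split]; congruence).
    exists (exist _ _ Heq_rel). split; [intros u v Huv; left; exact Huv |].
    intros Heq. apply (f_equal (@proj1_sig _ _)) in Heq. simpl in Heq.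
    assert (Hpair : pair_rel a b a b) by (right; left; auto).
    rewrite <- Heq in Hpair. exact (Hab Hpair).
  - apply upset_strictly_isotone_of_embedding; [apply eqrel_poset | |].
    + intros R S HRS u v [Huv | (s & t & Hu & Hv & Hst)]; [left | right; exists s, t]; auto.
    + intros R S Hh s t Hst.
      assert (Hest : proj1_sig (h S) (e s) (e t)) by (apply Hh; right; exists s, t; auto).
      destruct Hest as [Hpair | (s' & t' & Hs & Ht & Hst')].
      * apply (pair_rel_image X a b e e_miss), e_inj in Hpair. subst t.
        apply (proj1 (proj2_sig S)).
      * rewrite (e_inj _ _ Hs), (e_inj _ _ Ht). exact Hst'.
Qed.

Theorem corollary2p3 :
  (forall (T : Type) (le : T -> T -> Prop), is_poset le ->
     forall x : T, (exists y, lt_of le y x) ->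
     forall g : T -> upset le x, strictly_isotone le (upset_le le x) g ->
     ~ exists f : ideal le -> T, strictly_isotone (ideal_le le) le f)
  /\
  (forall X : Type, infinite X ->
     ~ exists f : ideal (subset_le X) -> (X -> Prop),
         strictly_isotone (ideal_le (subset_le X)) (subset_le X) f)
  /\
  (forall X : Type, infinite X ->
     ~ exists f : ideal (eqrel_le X) -> eqrel X,
         strictly_isotone (ideal_le (eqrel_le X)) (eqrel_le X) f).
Proof.
  split; [| split].
  - exact no_strictly_isotone_ideal_map.
  - exact no_strictly_isotone_ideal_map_subsets.
  - exact no_strictly_isotone_ideal_map_eqrels.
Qed.
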